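(* Let $E$ be a Banach space with $E = V \oplus W$ ($V, W$ linear subspaces), and let $\Phi\colon E \to \mathbb{R}$ be locally Lipschitz. For $w \in W$ set $\varphi(w) = \sup_{g \in V} \Phi(g+w)$ and $V(w) = \{ v \in V : \Phi(v+w) = \max_{g \in V} \Phi(g+w) \}$. Assume: (a) $V(w) \neq \varnothing$ for every $w \in W$; (b) $\varphi\colon W \to \mathbb{R}$ is bounded below and attains its minimum at some $\overline{w} \in W$; and assume moreover that the multivalued mapping $T\colon W \to 2^V$, $T(w) = V(w)$, is lower semi-continuous and that $T(w)$ is convex for every $w \in W$. Then there exists a continuous map $s\colon W\to V$ with $s(w)\in V(w)$ for all $w$, and $\overline{u} = s(\overline{w}) + \overline{w}$ is a critical point of $\Phi$ (i.e. $0 \in \partial\Phi(\overline{u})$) with $$\Phi(\overline{u}) = \min_{w \in W} \max_{v \in V} \Phi(v+w).$$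
   Context: A multivalued mapping $T\colon W \to 2^V$ is lower semi-continuous if for every open set $A \subset V$ the set $\{w \in W : T(w) \cap A \neq \varnothing\}$ is open in $W$. For a locally Lipschitz $\Phi$, $\Phi^\circ(x;v) = \limsup_{y \to x,\, t \downarrow 0} \frac{\Phi(y+tv) - \Phi(y)}{t}$ and the Clarke subdifferential is $\partial\Phi(x) = \{x^* \in E^* : \Phi^\circ(x;v) \ge \langle x^*, v\rangle \ \forall v \in E\}$; $x$ is a critical point if $0 \in \partial\Phi(x)$. *)

From HB Require Import structures.
From mathcomp Require Import all_boot all_order all_algebra.
From mathcomp Require Import all_classical all_reals all_analysis.
Set Implicit Arguments. Unset Strict Implicit. Unset Printing Implicit Defensive.
Import Order.TTheory GRing.Theory Num.Theory.
Import numFieldNormedType.Exports.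
Local Open Scope classical_set_scope.
Local Open Scope ring_scope.

Section Defs.
Context {R : realType} {E : normedModType R}.

Definition is_subspace (S : set E) : Prop :=
  S 0 /\ (forall a x y, S x -> S y -> S (a *: x + y)).

Definition direct_sum (V W : set E) : Prop :=
  is_subspace V /\ is_subspace W /\ closed V /\ closed W /\
  (forall u : E, exists v w, V v /\ W w /\ u = v + w) /\
  (forall x, V x -> W x -> x = 0).

Definition locally_lipschitz (Phi : E -> R) : Prop :=
  forall x : E, exists r : R, exists L : R, 0 < r /\
    forall y z, ball x r y -> ball x r z -> `|Phi y - Phi z| <= L * `|y - z|.

Definition phi_sup (Phi : E -> R) (V : set E) (w : E) : \bar R :=
  ereal_sup [set (Phi (g + w))%:E | g in V].

Definition Vmax (Phi : E -> R) (V : set E) (w : E) : set E :=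
  [set v | V v /\ forall g, V g -> Phi (g + w) <= Phi (v + w)].

Definition convex_subset (S : set E) : Prop :=
  forall x y (t : R), S x -> S y -> 0 <= t -> t <= 1 ->
    S (t *: x + (1 - t) *: y).

(* lower semi-continuity of T : W -> 2^V (subspace topologies) *)
Definition lsc_multi (W V : set E) (T : E -> set E) : Prop :=
  forall A : set E, (exists O : set E, open O /\ A = O `&` V) ->
    exists O' : set E, open O' /\
      [set w | W w /\ (T w `&` A) !=set0] = O' `&` W.

(* Clarke generalized directional derivative
   Phi°(x;v) = limsup_{y -> x, t downarrow 0} (Phi(y + t v) - Phi(y)) / t
             = inf_{delta > 0} sup { quotient | y in ball x delta, 0 < t < delta } *)
Definition clarke_dd (Phi : E -> R) (x v : E) : \bar R :=
  ereal_inf [set ereal_sup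
      [set ((Phi (yt.1 + yt.2 *: v) - Phi yt.1) / yt.2)%:E
         | yt in [set yt : E * R | ball x delta yt.1 /\ 0 < yt.2 < delta]]
    | delta in [set d : R | 0 < d]].

Definition clarke_subdiff (Phi : E -> R) (x : E) : set (E -> R) :=
  [set xs | (forall (a : R) (u w : E), xs (a *: u + w) = a * xs u + xs w) /\
            continuous xs /\
            (forall v : E, (xs v)%:E <= clarke_dd Phi x v)%E].

Definition critical_point (Phi : E -> R) (x : E) : Prop :=
  clarke_subdiff Phi x (fun _ => 0).

End Defs.

From HB Require Import structures.
From mathcomp Require Import all_boot all_order all_algebra.
From mathcomp Require Import all_classical all_reals all_analysis.
From mathcomp Require Import ring lra wochoice.
Import Order.TTheory GRing.Theory Num.Theory.
Import numFieldNormedType.Exports.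
Local Open Scope classical_set_scope.
Local Open Scope ring_scope.
Set Implicit Arguments. Unset Strict Implicit. Unset Printing Implicit Defensive.

(* The selection [s] comes from Michael's selection theorem for the lower
   semicontinuous map w |-> V(w), whose values are nonempty, convex and closed
   (Phi is continuous).  Michael's theorem is proved for a metric domain without
   paracompactness: at scale 2^-n, the centres are the points c whose
   3 2^-n-ball is served by one value a(c), chosen minimal for a well-ordering
   so that nearby centres agree; the bumps max(0, 2^-n - dist(x, centres)),
   normalised and summed over n, glue these values into a continuous
   approximate selection, and refining approximate selections geometrically
   converges uniformly to an exact one.
   For criticality at u = s(wbar) + wbar, take a direction v + w with v in V,
   w in W, and put w' = wbar + t w and y = s(w') - t v + wbar.  Since
   y - wbar lies in V, Phi(y) <= phi(wbar) <= phi(w') = Phi(y + t (v + w)), and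
   y -> u as t -> 0 by continuity of s; so the Clarke difference quotients near
   u can be made nonnegative, Phi^o(u; .) >= 0 and 0 is in the subdifferential. *)

Section HalfPowers.
Context {R : realType}.

Definition halfpow (k : nat) : R := 2^-1 ^+ k.

Lemma halfpow_gt0 k : 0 < halfpow k.
Proof. by rewrite exprn_gt0 // invr_gt0. Qed.

Lemma halfpow_ge0 k : 0 <= halfpow k.
Proof. exact/ltW/halfpow_gt0. Qed.

Lemma halfpowS k : halfpow k.+1 = halfpow k / 2.
Proof. by rewrite /halfpow exprSr. Qed.

Lemma exists_halfpow_lt c e : 0 < e -> exists k, c * halfpow k < e.
Proof.
move=> e_gt0.
have half_lt1 : `|(2^-1 : R)| < 1 by rewrite ger0_norm ?invr_ge0 // invf_lt1 // ltr1n.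
have /cvgrPdist_lt/(_ e e_gt0) [N _ HN] := cvg_geometric c half_lt1.
exists N; apply: le_lt_trans (HN N (leqnn N)).
by rewrite /= sub0r normrN ler_norm.
Qed.

End HalfPowers.

Section ContinuousOn.
Context {R : realType} {E F : normedModType R}.
Implicit Types (W : set E) (f g : E -> F).

Definition cont_on W f := forall x, W x -> forall e, 0 < e ->
  exists2 d, 0 < d & forall y, W y -> `|x - y| < d -> `|f x - f y| < e.

Lemma cont_onP W f :
  cont_on W f <-> forall x, W x -> f @ within W (nbhs x) --> f x.
Proof.
split=> [cf x Wx | cf x Wx e e_gt0].
  apply/cvgrPdist_lt => e e_gt0; have [d d_gt0 fd] := cf x Wx e e_gt0.
  apply/nbhs_ballP; exists d => //= y; rewrite -ball_normE /= => xy Wy.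
  exact: fd.
have /cvgrPdist_lt/(_ e e_gt0)/nbhs_ballP [d /= d_gt0 fd] := cf x Wx.
by exists d => // y Wy xy; apply: fd => //; rewrite -ball_normE.
Qed.

Lemma cont_on_within W f : cont_on W f -> {within W, continuous f}.
Proof. by move=> /cont_onP cf; apply/subspace_continuousP. Qed.

Lemma cont_on_sum W (u : nat -> E -> F) N : (forall n, cont_on W (u n)) ->
  cont_on W (fun x => \sum_(k < N) u k x).
Proof.
move=> cu; apply/cont_onP => x Wx.
elim: N => [|N IH].
  under eq_fun do rewrite big_ord0.
  by rewrite big_ord0; exact: cvg_cst.
under eq_fun do rewrite big_ord_recr /=.
by rewrite big_ord_recr; apply: cvgD => //; exact: (cont_onP _ _).1 (cu N) x Wx.
Qed.

Lemma cont_on_scaled W (h : E -> R) f :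
  (forall x y, `|h x - h y| <= `|x - y|) ->
  (forall x, W x -> exists2 d, 0 < d &
     exists v, forall y, `|x - y| < d -> f y = h y *: v) ->
  cont_on W f.
Proof.
move=> h_lip f_loc x Wx e e_gt0; have [d d_gt0 [v fE]] := f_loc x Wx.
have v1_gt0 : 0 < `|v| + 1 by rewrite ltr_pwDr ?normr_ge0.
exists (Num.min d (e / (`|v| + 1))); first by rewrite lt_min d_gt0 divr_gt0.
move=> y _; rewrite lt_min => /andP[xy_d xy_e].
rewrite fE ?subrr ?normr0 // fE // -scalerBl normrZ.
apply: le_lt_trans (_ : `|x - y| * (`|v| + 1) < e); last by rewrite -ltr_pdivlMr.
by rewrite ler_pM ?normr_ge0 ?h_lip ?lerDl.
Qed.

End ContinuousOn.

Section UniformLimit.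
Context {R : realType} {E : normedModType R} {F : completeNormedModType R}.

Lemma halfpow_telescope (u : nat -> F) c :
  (forall n, `|u n.+1 - u n| <= c * halfpow n) ->
  forall n m, (n <= m)%N -> `|u m - u n| <= 2 * c * (halfpow n - halfpow m).
Proof.
move=> du n m /subnKC <-; elim: (m - n)%N => [|j IH].
  by rewrite addn0 !subrr normr0 mulr0.
rewrite addnS -(subrK (u (n + j)%N) (u _)) -addrA.
apply: le_trans (ler_normD _ _) _.
rewrite [X in _ <= X](_ : _ = c * halfpow (n + j) + 2 * c * (halfpow n - halfpow (n + j))).
  exact: lerD.
by rewrite halfpowS; field.
Qed.

Lemma halfpow_cauchy (u : nat -> F) c :
  (forall n, `|u n.+1 - u n| <= c * halfpow n) ->
  cvg (u @ \oo) /\ forall n, `|lim (u @ \oo) - u n| <= 2 * c * halfpow n.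
Proof.
move=> du.
have tail n m : (n <= m)%N -> `|u m - u n| <= 2 * c * halfpow n.
  move=> nm; apply: le_trans (halfpow_telescope du nm) _.
  have c_ge0 : 0 <= c.
    by have := du 0%N; rewrite /halfpow expr0 mulr1; exact: le_trans (normr_ge0 _).
  by rewrite ler_wpM2l ?mulr_ge0 // gerBl ltW // halfpow_gt0.
have u_cvg : cvg (u @ \oo).
  apply: (@cauchy_cvg _ (u @ \oo) _); apply/cauchyP => e e_gt0.
  have [k ck] := exists_halfpow_lt (2 * c) e_gt0.
  exists (u k); exists k => // m /= km.
  by rewrite -ball_normE /= distrC; exact: le_lt_trans (tail k m km) ck.
split=> // n; apply/ler_addgt0Pr => e e_gt0.
have /cvgr_dist_lt/(_ e e_gt0) [N _ HN] := u_cvg.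
rewrite -(subrK (u (n + N)%N) (lim _)) -addrA.
apply: le_trans (ler_normD _ _) _; rewrite [leRHS]addrC; apply: lerD.
  exact: ltW (HN _ (leq_addl _ _)).
exact: tail (leq_addr _ _).
Qed.

Lemma cont_on_uniform_limit (W : set E) (u : nat -> E -> F) g c :
  (forall n, cont_on W (u n)) ->
  (forall n x, W x -> `|g x - u n x| <= c * halfpow n) -> cont_on W g.
Proof.
move=> cu gu x Wx e e_gt0.
have e3_gt0 : 0 < e / 3 by rewrite divr_gt0.
have [k ck] := exists_halfpow_lt c e3_gt0.
have [d d_gt0 ud] := cu k x Wx _ e3_gt0.
exists d => // y Wy xy.
rewrite (_ : g x - g y = (g x - u k x) + (u k x - u k y) + (u k y - g y));
  last by rewrite !addrA subrK addrNK.
rewrite [e](_ : _ = e / 3 + e / 3 + e / 3); last by field.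
apply: le_lt_trans (ler_normD _ _) _; apply: ler_ltD.
  apply: le_trans (ler_normD _ _) _; apply: lerD.
    exact/ltW/(le_lt_trans (gu k x Wx) ck).
  exact/ltW/ud.
by rewrite distrC; exact: le_lt_trans (gu k y Wy) ck.
Qed.

Lemma halfpow_uniform_limit (W : set E) (u : nat -> E -> F) c :
  (forall n, cont_on W (u n)) ->
  (forall n x, W x -> `|u n.+1 x - u n x| <= c * halfpow n) ->
  exists g : E -> F, [/\ cont_on W g,
    forall n x, W x -> `|g x - u n x| <= 2 * c * halfpow n &
    forall x, W x -> u ^~ x @ \oo --> g x].
Proof.
move=> cu du; pose g x := lim (u ^~ x @ \oo).
have gu x : W x -> cvg (u ^~ x @ \oo) /\
    forall n, `|g x - u n x| <= 2 * c * halfpow n.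
  by move=> Wx; apply: halfpow_cauchy => n; exact: du.
exists g; split=> [|n x Wx|x Wx]; last exact: (gu x Wx).1.
  by apply: (cont_on_uniform_limit cu) => n x Wx; exact: (gu x Wx).2.
exact: (gu x Wx).2.
Qed.

End UniformLimit.

Section Convexity.
Context {R : realType} {F : normedModType R}.

Lemma normr_convex_lt (a b : F) (t e : R) : 0 <= t -> t <= 1 ->
  `|a| < e -> `|b| < e -> `|t *: a + (1 - t) *: b| < e.
Proof.
move=> t_ge0 t_le1 a_lt b_lt; apply: le_lt_trans (ler_normD _ _) _.
have t1_ge0 : 0 <= 1 - t by rewrite subr_ge0.
rewrite !normrZ (ger0_norm t_ge0) (ger0_norm t1_ge0).
have [->|t_neq1] := eqVneq t 1; first by rewrite subrr mul0r addr0 mul1r.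
have t1_gt0 : 0 < 1 - t by rewrite subr_gt0 lt_neqAle t_neq1.
have : t * `|a| <= t * e by rewrite ler_wpM2l // ltW.
have : (1 - t) * `|b| < (1 - t) * e by rewrite ltr_pM2l.
lra.
Qed.

Lemma convex_thickening (S : set F) (e : R) : convex_subset S ->
  convex_subset [set y | exists2 z, S z & `|y - z| < e].
Proof.
move=> S_cvx y1 y2 t [z1 Sz1 yz1] [z2 Sz2 yz2] t_ge0 t_le1.
exists (t *: z1 + (1 - t) *: z2); first exact: S_cvx.
rewrite (_ : _ - _ = t *: (y1 - z1) + (1 - t) *: (y2 - z2)).
  exact: normr_convex_lt.
by rewrite !scalerBr opprD !addrA; congr (_ - _); rewrite addrAC.
Qed.

Lemma convex_weighted_mean (K : set F) (t : nat -> R) (y : nat -> F) N :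
  convex_subset K -> (forall k, 0 <= t k) -> (forall k, 0 < t k -> K (y k)) ->
  0 < \sum_(k < N) t k ->
  K ((\sum_(k < N) t k)^-1 *: \sum_(k < N) t k *: y k).
Proof.
move=> K_cvx t_ge0 Ky.
suff : (\sum_(k < N) t k = 0 /\ \sum_(k < N) t k *: y k = 0) \/
    (0 < \sum_(k < N) t k /\ K ((\sum_(k < N) t k)^-1 *: \sum_(k < N) t k *: y k)).
  by case=> [[-> _]|[]]; rewrite ?ltxx.
elim: N => [|N IH]; first by left; rewrite !big_ord0.
rewrite !big_ord_recr /=.
have [->|tN_neq0] := eqVneq (t N) 0; first by rewrite addr0 scale0r addr0.
have tN_gt0 : 0 < t N by rewrite lt_neqAle eq_sym tN_neq0 t_ge0.
right; case: IH => [[-> ->]|[s_gt0 K_mean]].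
  by rewrite !add0r scalerA mulVf ?scale1r ?gt_eqF //; split=> //; exact: Ky.
split; first exact: addr_gt0.
set s := \sum_(k < N) t k; set z := \sum_(k < N) t k *: y k.
have st_gt0 : 0 < s + t N by rewrite addr_gt0.
rewrite (_ : _ *: (z + _) = (s / (s + t N)) *: (s^-1 *: z) + (1 - s / (s + t N)) *: y N).
  apply: K_cvx => //; [exact: Ky | by rewrite divr_ge0 ?ltW |].
  by rewrite ler_pdivrMr // mul1r lerDl ltW.
by rewrite scalerDr !scalerA; congr (_ *: _ + _ *: _); field; rewrite ?gt_eqF.
Qed.

End Convexity.

Section LeastElement.
Context {T : pointedType}.

Let wo : rel T := sval (well_ordering_principle T).

Definition least (P : set T) : T :=
  xget point [set x | P x /\ forall y, P y -> wo x y].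

Lemma leastP (P : set T) : P !=set0 ->
  P (least P) /\ forall y, P y -> wo (least P) y.
Proof.
move=> [x Px]; apply: (xgetPex point (P := [set x | P x /\ forall y, P y -> wo x y])).
have [m [[Pm m_min] _]] := svalP (well_ordering_principle T) [pred y | `[< P y >]]
  (ex_intro _ x (introT (asboolP _) Px)).
by exists m; split=> [|y Py]; [move: Pm | apply: m_min]; rewrite inE /= ?asboolE.
Qed.

Lemma least_in (P : set T) : P !=set0 -> P (least P).
Proof. by move=> /leastP []. Qed.

Lemma least_coherent (P Q : set T) : P (least Q) -> Q (least P) -> least P = least Q.
Proof.
move=> PQ QP; have wo_chain : wo_chain wo predT.
  by move=> A _; exact: (svalP (well_ordering_principle T)).
apply: (wo_chain_antisymmetric wo_chain) => //; apply/andP; split.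
  by apply: (leastP _).2 => //; exists (least Q).
by apply: (leastP _).2 => //; exists (least P).
Qed.

End LeastElement.

Section Bump.
Context {R : realType} {E : normedModType R}.
Variables (C : set E) (r : R).
Hypothesis r_ge0 : 0 <= r.

Definition bump (x : E) : R := sup ([set 0] `|` [set r - `|x - c| | c in C]).

Let bump_set_ne x : ([set 0] `|` [set r - `|x - c| | c in C]) !=set0.
Proof. by exists 0; left. Qed.

Let bump_set_ub x : ubound ([set 0] `|` [set r - `|x - c| | c in C]) r.
Proof. by move=> _ [-> | [c _ <-]] //; rewrite gerBl. Qed.

Let bump_has_sup x : has_sup ([set 0] `|` [set r - `|x - c| | c in C]).
Proof. by split; [exact: bump_set_ne | exists r; exact: bump_set_ub]. Qed.

Lemma bump_ge0 x : 0 <= bump x.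
Proof. by apply: sup_upper_bound; [exact: bump_has_sup | left]. Qed.

Lemma bump_le x : bump x <= r.
Proof. by apply: ge_sup; [exact: bump_set_ne | exact: bump_set_ub]. Qed.

Lemma bump_ge x c : C c -> r - `|x - c| <= bump x.
Proof. by move=> Cc; apply: sup_upper_bound; [exact: bump_has_sup | right; exists c]. Qed.

Lemma bump_lipschitz x y : `|bump x - bump y| <= `|x - y|.
Proof.
suff bump_leD u v : bump u <= bump v + `|u - v|.
  have := bump_leD x y; have := bump_leD y x; rewrite (distrC y x) ler_norml.
  by move=> h1 h2; apply/andP; split; lra.
apply: ge_sup; first exact: bump_set_ne.
move=> _ [-> | [c Cc <-]]; first by rewrite addr_ge0 ?bump_ge0.
have := bump_ge v Cc; have := ler_distD u v c; rewrite (distrC v u); lra.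
Qed.

Lemma bump_gt0 x : 0 < bump x -> exists2 c, C c & `|x - c| < r.
Proof.
move=> bx_gt0; apply: contrapT => no_c; move: bx_gt0; apply/negP; rewrite -leNgt.
apply: ge_sup; first exact: bump_set_ne.
move=> _ [-> // | [c Cc <-]]; rewrite subr_le0 leNgt; apply/negP => xc.
by apply: no_c; exists c.
Qed.

End Bump.

Section ConvexLowerOpenSelection.
Context {R : realType} {E : normedModType R} {F : completeNormedModType R}.
Variables (W : set E) (U : F -> E -> Prop).
Hypothesis U_ne : forall x, W x -> exists y, U y x.
Hypothesis U_open : forall y x, W x -> U y x ->
  exists2 d, 0 < d & forall x', W x' -> `|x - x'| < d -> U y x'.
Hypothesis U_convex : forall x, W x -> convex_subset [set y | U y x].

Let a (x : E) : F := least [set y | U y x].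

Let a_adm x : W x -> U (a x) x.
Proof. by move=> /U_ne [y Uy]; apply: (@least_in _ [set y | U y x]); exists y. Qed.

Let center n c := W c /\
  forall x', W x' -> `|c - x'| < 3 * halfpow n -> U (a c) x'.

Let center_coherent n c c' : center n c -> center n c' ->
  `|c - c'| < 3 * halfpow n -> a c = a c'.
Proof.
move=> [Wc Uc] [Wc' Uc'] cc'.
apply: (@least_coherent _ [set y | U y c] [set y | U y c']); last exact: Uc c' Wc' cc'.
by apply: (Uc' c Wc); rewrite distrC.
Qed.

Let level n := bump (center n) (halfpow n).

Let level_ge0 n x : 0 <= level n x.
Proof. exact: bump_ge0 (halfpow_ge0 n) x. Qed.

Let level_le n x : level n x <= halfpow n.
Proof. exact: bump_le (halfpow_ge0 n) x. Qed.

Let level_lipschitz n x y : `|level n x - level n y| <= `|x - y|.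
Proof. exact: bump_lipschitz (halfpow_ge0 n) x y. Qed.

Let pick n x := xget point [set c | center n c /\ `|x - c| < halfpow n].

Let label n x := a (pick n x).

Let pick_center n x : 0 < level n x ->
  center n (pick n x) /\ `|x - pick n x| < halfpow n.
Proof.
move=> /bump_gt0 [c Cc xc].
by apply: (xgetPex point (P := [set c | center n c /\ `|x - c| < halfpow n])); exists c.
Qed.

Let label_adm n x : W x -> 0 < level n x -> U (label n x) x.
Proof.
move=> Wx /pick_center [[_ Uc] xc]; apply: (Uc x Wx).
by rewrite distrC; apply: lt_le_trans xc _; rewrite ler_peMl ?halfpow_ge0 ?ler1n.
Qed.

Let label_locally_constant n x : exists y, forall x',
  `|x - x'| < halfpow n / 2 -> 0 < level n x' -> label n x' = y.
Proof.
have [[x0 [xx0 /pick_center [C0 xc0]]]|no_x0] :=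
  pselect (exists x0, `|x - x0| < halfpow n / 2 /\ 0 < level n x0); last first.
  by exists point => x' xx' lx'; exfalso; apply: no_x0; exists x'.
exists (a (pick n x0)) => x' xx' /pick_center [C xc].
apply: center_coherent C C0 _.
have := ler_distD x' (pick n x') (pick n x0); have := ler_distD x x' (pick n x0).
have := ler_distD x0 x (pick n x0); rewrite (distrC (pick n x') x') (distrC x' x).
lra.
Qed.

Let level_exists x : W x -> exists n, 0 < level n x.
Proof.
move=> Wx; have [d d_gt0 Ud] := U_open Wx (a_adm Wx).
have [n nd] := exists_halfpow_lt 3 d_gt0.
have x_center : center n x.
  by split=> // x' Wx' xx'; apply: Ud => //; exact: lt_trans nd.
exists n; apply: lt_le_trans (bump_ge (halfpow_ge0 n) x x_center).
by rewrite subrr normr0 subr0 halfpow_gt0.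
Qed.

Let one_norm_gt0 (y : F) : 0 < 1 + `|y|.
Proof. by rewrite (lt_le_trans ltr01) // lerDl. Qed.

(* The normalisation keeps [term n] below [halfpow n], so both series converge uniformly. *)
Let weight n x := level n x / (1 + `|label n x|).

Let term n x := weight n x *: label n x.

Let weight_ge0 n x : 0 <= weight n x.
Proof. by rewrite divr_ge0 ?level_ge0 ?ltW. Qed.

Let weight_gt0 n x : (0 < weight n x) = (0 < level n x).
Proof. by rewrite pmulr_lgt0 ?invr_gt0. Qed.

Let weightM n x : weight n x * (1 + `|label n x|) = level n x.
Proof. by rewrite divfK ?gt_eqF. Qed.

Let weight_le n x : weight n x <= halfpow n.
Proof.
apply: le_trans (level_le n x); rewrite -weightM.
by rewrite ler_peMr // lerDl.
Qed.

Let term_le n x : `|term n x| <= halfpow n.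
Proof.
apply: le_trans (level_le n x); rewrite -weightM normrZ ger0_norm //.
by rewrite ler_wpM2l // lerDr.
Qed.

Let weight_local n x : exists2 d, 0 < d & exists ys, forall y, `|x - y| < d ->
  weight n y = level n y * (1 + `|ys|)^-1 /\
  term n y = level n y *: ((1 + `|ys|)^-1 *: ys).
Proof.
have [ys ys_label] := label_locally_constant n x.
exists (halfpow n / 2); first by rewrite divr_gt0 ?halfpow_gt0.
exists ys => y xy; rewrite /term /weight scalerA.
have [ly0|ly_gt0] := eqVneq (level n y) 0.
  by rewrite ly0 !mul0r !scale0r; split.
by rewrite ys_label // lt_neqAle eq_sym ly_gt0 level_ge0.
Qed.

Let cont_on_weight n : cont_on W (weight n).
Proof.
apply: (@cont_on_scaled _ _ _ _ (level n)) => [|x _]; first exact: level_lipschitz.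
have [d d_gt0 [ys ysE]] := weight_local n x.
by exists d => //; exists (1 + `|ys|)^-1 => y xy; rewrite (ysE y xy).1.
Qed.

Let cont_on_term n : cont_on W (term n).
Proof.
apply: (@cont_on_scaled _ _ _ _ (level n)) => [|x _]; first exact: level_lipschitz.
have [d d_gt0 [ys ysE]] := weight_local n x.
by exists d => //; exists ((1 + `|ys|)^-1 *: ys) => y xy; rewrite (ysE y xy).2.
Qed.

Let wsum N x := \sum_(k < N) weight k x.

Let tsum N x := \sum_(k < N) term k x.

Let wsum_ge n N x : (n < N)%N -> weight n x <= wsum N x.
Proof.
move=> nN; rewrite /wsum (bigD1 (Ordinal nN)) //= lerDl.
by apply: sumr_ge0 => i _; exact: weight_ge0.
Qed.

Let wsumS n x : `|wsum n.+1 x - wsum n x| <= 1 * halfpow n.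
Proof.
by rewrite /wsum big_ord_recr /= addrAC subrr add0r mul1r ger0_norm ?weight_le.
Qed.

Let tsumS n x : `|tsum n.+1 x - tsum n x| <= 1 * halfpow n.
Proof. by rewrite /tsum big_ord_recr /= addrAC subrr add0r mul1r term_le. Qed.

Lemma convex_lower_open_selection :
  exists f : E -> F, cont_on W f /\ forall x, W x -> closure [set y | U y x] (f x).
Proof.
have [S [cS _ S_lim]] := halfpow_uniform_limit
  (fun N => cont_on_sum N cont_on_weight) (fun n x _ => wsumS n x).
have [T [cT _ T_lim]] := halfpow_uniform_limit
  (fun N => cont_on_sum N cont_on_term) (fun n x _ => tsumS n x).
have S_gt0 x : W x -> 0 < S x.
  move=> Wx; have [n ln] := level_exists Wx.
  apply: (@lt_le_trans _ _ (weight n x)); first by rewrite weight_gt0.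
  by apply: (cvgr_to_ge (S_lim x Wx)); exists n.+1 => // N /= nN; exact: wsum_ge.
exists (fun x => (S x)^-1 *: T x); split.
  apply/cont_onP => x Wx; apply: cvgZ; last exact: (cont_onP _ _).1 cT x Wx.
  by apply: cvgV; [rewrite gt_eqF ?S_gt0 | exact: (cont_onP _ _).1 cS x Wx].
move=> x Wx.
have mean_lim : (fun N => (wsum N x)^-1 *: tsum N x) @ \oo --> (S x)^-1 *: T x.
  apply: cvgZ; last exact: T_lim.
  by apply: cvgV; [rewrite gt_eqF ?S_gt0 | exact: S_lim].
apply: (closed_cvg _ (@closed_closure _ _) _ _ mean_lim).
have [n ln] := level_exists Wx.
exists n.+1 => // N /= nN; apply: subset_closure.
apply: (convex_weighted_mean (K := [set y | U y x]) (t := weight ^~ x) (y := label ^~ x)).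
- exact: U_convex.
- by move=> k; exact: weight_ge0.
- by move=> k; rewrite weight_gt0; exact: label_adm.
- by apply: lt_le_trans (wsum_ge x nN); rewrite weight_gt0.
Qed.

End ConvexLowerOpenSelection.

Section LowerSemicontinuity.
Context {R : realType} {E F : normedModType R}.
Variable W : set E.
Implicit Types T : E -> set F.

Definition lsc_on T := forall x, W x -> forall z, T x z -> forall e, 0 < e ->
  exists2 d, 0 < d &
    forall x', W x' -> `|x - x'| < d -> exists2 z', T x' z' & `|z - z'| < e.

Definition convex_lsc T := [/\ forall x, W x -> T x !=set0,
  forall x, W x -> convex_subset (T x) & lsc_on T].

Lemma convex_lsc_near T (g : E -> F) e : convex_lsc T -> cont_on W g ->
  (forall x, W x -> exists2 z, T x z & `|g x - z| < e) ->
  convex_lsc (fun x => [set z | T x z /\ `|g x - z| < e]).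
Proof.
move=> [_ T_cvx T_lsc] cg g_near; split.
- by move=> x Wx; have [z Tz gz] := g_near x Wx; exists z.
- move=> x Wx z1 z2 t [Tz1 gz1] [Tz2 gz2] t_ge0 t_le1; split; first exact: T_cvx.
  rewrite (_ : g x - _ = t *: (g x - z1) + (1 - t) *: (g x - z2)).
    exact: normr_convex_lt.
  have t_1t : t + (1 - t) = 1 by rewrite addrC subrK.
  by rewrite !scalerBr addrACA -scalerDl t_1t scale1r opprD.
- move=> x Wx z [Tz gz] e' e'_gt0.
  have m_gt0 : 0 < (e - `|g x - z|) / 2 by rewrite divr_gt0 // subr_gt0.
  have em_gt0 : 0 < Num.min e' ((e - `|g x - z|) / 2) by rewrite lt_min e'_gt0.
  have [d1 d1_gt0 Td1] := T_lsc x Wx z Tz _ em_gt0.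
  have [d2 d2_gt0 gd2] := cg x Wx _ m_gt0.
  exists (Num.min d1 d2); first by rewrite lt_min d1_gt0 d2_gt0.
  move=> x' Wx'; rewrite lt_min => /andP[xd1 xd2].
  have [z' Tz'] := Td1 x' Wx' xd1; rewrite lt_min => /andP[zz'1 zz'2].
  exists z' => //; split=> //.
  have := gd2 x' Wx' xd2; have := ler_distD (g x) (g x') z'.
  have := ler_distD z (g x) z'; rewrite (distrC (g x') (g x)); lra.
Qed.

End LowerSemicontinuity.

Section MichaelSelection.
Context {R : realType} {E : normedModType R} {F : completeNormedModType R}.
Variable W : set E.
Implicit Types (T : E -> set F) (f : E -> F).

Lemma approximate_selection T e : convex_lsc W T -> 0 < e ->
  exists2 f, cont_on W f & forall x, W x -> exists2 z, T x z & `|f x - z| < e.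
Proof.
move=> [T_ne T_cvx T_lsc] e_gt0; have e2_gt0 : 0 < e / 2 by rewrite divr_gt0.
pose U y x := exists2 z, T x z & `|y - z| < e / 2.
have U_ne x : W x -> exists y, U y x.
  by move=> /T_ne [z Tz]; exists z, z; rewrite // subrr normr0.
have U_open y x : W x -> U y x ->
    exists2 d, 0 < d & forall x', W x' -> `|x - x'| < d -> U y x'.
  move=> Wx [z Tz yz]; have yz_gt0 : 0 < e / 2 - `|y - z| by rewrite subr_gt0.
  have [d d_gt0 Td] := T_lsc x Wx z Tz _ yz_gt0.
  exists d => // x' Wx' xx'; have [z' Tz' zz'] := Td x' Wx' xx'.
  by exists z' => //; have := ler_distD z y z'; lra.
have U_cvx x : W x -> convex_subset [set y | U y x].
  by move=> Wx; apply: convex_thickening; exact: T_cvx.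
have [f [cf f_cl]] := convex_lower_open_selection U_ne U_open U_cvx.
exists f => // x Wx.
have [y [[z Tz yz] /=]] := f_cl x Wx _ (nbhsx_ballx (f x) _ e2_gt0).
rewrite -ball_normE /= => fy; exists z => //.
by have := ler_distD y (f x) z; lra.
Qed.

Lemma approximate_selection_refine T f k : convex_lsc W T -> cont_on W f ->
  (forall x, W x -> exists2 z, T x z & `|f x - z| < halfpow k) ->
  exists f', [/\ cont_on W f',
    forall x, W x -> exists2 z, T x z & `|f' x - z| < halfpow k.+1 &
    forall x, W x -> `|f' x - f x| <= 2 * halfpow k].
Proof.
move=> T_adm cf f_near.
have [f' cf' f'_near] := approximate_selection (convex_lsc_near T_adm cf f_near)
  (halfpow_gt0 k.+1).
exists f'; split=> // x Wx; have [z [Tz fz] f'z] := f'_near x Wx; first by exists z.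
move: f'z; rewrite halfpowS; have := ler_distD z (f' x) (f x).
rewrite (distrC z (f x)); have := @halfpow_gt0 R k; lra.
Qed.

Lemma michael_selection T : convex_lsc W T -> (forall x, W x -> closed (T x)) ->
  exists2 s, cont_on W s & forall x, W x -> T x (s x).
Proof.
move=> T_adm T_cl.
pose near_sel k f := cont_on W f /\
  forall x, W x -> exists2 z, T x z & `|f x - z| < halfpow k.
pose refines (kf kf' : nat * (E -> F)) := kf'.1 = kf.1.+1 /\
  (near_sel kf.1 kf.2 -> near_sel kf'.1 kf'.2 /\
     forall x, W x -> `|kf'.2 x - kf.2 x| <= 2 * halfpow kf.1).
have refine kf : {kf' | refines kf kf'}.
  apply: cid; have [[cf f_near]|not_near] := pselect (near_sel kf.1 kf.2).
    have [f' [cf' f'_near f'f]] := approximate_selection_refine T_adm cf f_near.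
    by exists (kf.1.+1, f').
  by exists (kf.1.+1, kf.2).
have [f0 cf0 f0_near] := approximate_selection T_adm (halfpow_gt0 0).
have [u [u0 uS]] := dependent_choice refine (0%N, f0).
have u_near n : (u n).1 = n /\ near_sel n (u n).2.
  elim: n => [|n [un u_near]]; first by rewrite u0.
  have [uSn near_uSn] := uS n; rewrite un in uSn near_uSn.
  by have [] := near_uSn u_near; rewrite uSn.
have du n x : W x -> `|(u n.+1).2 x - (u n).2 x| <= 2 * halfpow n.
  move=> Wx; have [_ near_uSn] := uS n; have [un u_near_n] := u_near n.
  by rewrite un in near_uSn; exact: (near_uSn u_near_n).2 x Wx.
have [s [cs su _]] := halfpow_uniform_limit (fun n => (u_near n).2.1) du.
exists s => // x Wx; apply: (T_cl x Wx) => B /nbhs_ballP [e /= e_gt0 eB].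
have [k ke] := exists_halfpow_lt 5 e_gt0.
have [z Tz uz] := (u_near k).2.2 x Wx.
exists z; split=> //; apply: eB; rewrite -ball_normE /=.
have := su k x Wx; have := ler_distD ((u k).2 x) (s x) z; have := @halfpow_gt0 R k.
lra.
Qed.

End MichaelSelection.

Section MaximizerSets.
Context {R : realType} {E : normedModType R}.
Implicit Types (Phi : E -> R) (V W : set E).

Lemma locally_lipschitz_continuous Phi : locally_lipschitz Phi -> continuous Phi.
Proof.
move=> Phi_lip x; apply/cvgrPdist_lt => e e_gt0.
have [r [L [r_gt0 Lr]]] := Phi_lip x.
have L1_gt0 : 0 < `|L| + 1 by rewrite ltr_pwDr ?normr_ge0.
apply/nbhs_ballP; exists (Num.min r (e / (`|L| + 1))) => /=.
  by rewrite lt_min r_gt0 divr_gt0.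
move=> y; rewrite -ball_normE /= lt_min => /andP[xy_r xy_e].
apply: le_lt_trans (Lr x y (ballxx _ r_gt0) _) _; first by rewrite -ball_normE.
apply: le_lt_trans (_ : (`|L| + 1) * `|x - y| < e); last by rewrite mulrC -ltr_pdivlMr.
by rewrite ler_wpM2r ?normr_ge0 // (le_trans (ler_norm L)) ?lerDl.
Qed.

Lemma closed_Vmax Phi V w : continuous Phi -> closed V -> closed (Vmax Phi V w).
Proof.
move=> Phi_cont V_closed.
have -> : Vmax Phi V w = V `&` \bigcap_(g in V)
    ((fun v => Phi (v + w)) @^-1` [set r | Phi (g + w) <= r]).
  by apply/seteqP; split=> v [Vv v_max]; split=> // g Vg; exact: v_max.
apply: closedI => //; apply: closed_bigI => g _.
apply: preimage_closed; last exact: closed_ge.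
move=> v _; apply: continuous_comp; last exact: Phi_cont.
by apply: cvgD; [exact: cvg_id | exact: cvg_cst].
Qed.

Lemma phi_sup_Vmax Phi V w v : Vmax Phi V w v -> phi_sup Phi V w = (Phi (v + w))%:E.
Proof.
move=> [Vv v_max]; apply/eqP; rewrite eq_le; apply/andP; split.
  by apply: ge_ereal_sup => _ [g Vg <-]; rewrite lee_fin; exact: v_max.
by apply: ereal_sup_ubound; exists v.
Qed.

Lemma lsc_multi_lsc_on W V (T : E -> set E) :
  lsc_multi W V T -> (forall w, W w -> T w `<=` V) -> lsc_on W T.
Proof.
move=> T_lsc TV x Wx z Tz e e_gt0.
have [G [G_open GE]] := T_lsc (ball z e `&` V) (ex_intro _ _ (conj (ball_open z e) erefl)).
have [Gx _] : (G `&` W) x.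
  by rewrite -GE; split=> //; exists z; split=> //; split; [exact: ballxx | exact: TV Tz].
have /nbhs_ballP [d /= d_gt0 dG] := open_nbhs_nbhs (conj G_open Gx).
exists d => // x' Wx' xx'.
have : [set w | W w /\ (T w `&` (ball z e `&` V)) !=set0] x'.
  by rewrite GE; split=> //; apply: dG; rewrite -ball_normE.
by case=> _ [z' [Tz' [zz' _]]]; exists z' => //; move: zz'; rewrite -ball_normE.
Qed.

End MaximizerSets.

Section ClarkeCriticalPoint.
Context {R : realType} {E : normedModType R}.
Implicit Types (Phi : E -> R) (V W : set E).

Lemma clarke_dd_ge0 Phi x v :
  (forall delta, 0 < delta -> exists y t,
     [/\ ball x delta y, 0 < t < delta & Phi y <= Phi (y + t *: v)]) ->
  (0 <= clarke_dd Phi x v)%E.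
Proof.
move=> Phi_incr; apply: le_ereal_inf_tmp => _ [delta /= delta_gt0 <-].
have [y [t [xy /andP[t_gt0 t_lt] Phi_yt]]] := Phi_incr delta delta_gt0.
apply: le_ereal_sup_tmp; exists ((Phi (y + t *: v) - Phi y) / t)%:E.
  by exists (y, t) => //; split=> //; apply/andP.
by rewrite lee_fin divr_ge0 ?subr_ge0 // ltW.
Qed.

Lemma critical_point_clarke Phi x :
  (forall v, (0 <= clarke_dd Phi x v)%E) -> critical_point Phi x.
Proof.
move=> Phi_ge0; split=> [a u w|]; first by rewrite mulr0 addr0.
by split; [exact: cst_continuous | exact: Phi_ge0].
Qed.

Lemma saddle_critical_point V W Phi (s : E -> E) wbar :
  is_subspace V -> is_subspace W ->
  (forall u, exists v w, [/\ V v, W w & u = v + w]) ->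
  cont_on W s -> (forall w, W w -> Vmax Phi V w (s w)) -> W wbar ->
  (forall w, W w -> Phi (s wbar + wbar) <= Phi (s w + w)) ->
  critical_point Phi (s wbar + wbar).
Proof.
move=> [_ V_lin] [_ W_lin] VW_span s_cont s_max Wwbar wbar_min.
apply: critical_point_clarke => u; apply: clarke_dd_ge0 => delta delta_gt0.
have [v [w [Vv Ww ->]]] := VW_span u.
have delta2_gt0 : 0 < delta / 2 by rewrite divr_gt0.
have [d d_gt0 s_near] := s_cont wbar Wwbar _ delta2_gt0.
have dmin_gt0 : 0 < Num.min d (delta / 2) by rewrite lt_min d_gt0.
have [k] := exists_halfpow_lt (`|v| + `|w| + 1) dmin_gt0.
rewrite lt_min => /andP[k_d k_delta].
have t_gt0 := @halfpow_gt0 R k; set t := halfpow k in t_gt0 k_d k_delta.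
have [v_ge0 w_ge0] := (normr_ge0 v, normr_ge0 w).
pose w' := t *: w + wbar; have Ww' : W w' := W_lin t w wbar Ww Wwbar.
have Vy : V (- t *: v + s w') := V_lin _ _ _ Vv (s_max w' Ww').1.
exists ((- t *: v + s w') + wbar), t; split.
- have sw' : `|s wbar - s w'| < delta / 2.
    apply: (s_near w' Ww'); rewrite /w' opprD addrA addrAC subrr sub0r normrN.
    by rewrite normrZ gtr0_norm //; nra.
  rewrite -ball_normE /= (_ : _ - _ = (s wbar - s w') + t *: v); last first.
    by rewrite opprD addrACA subrr addr0 opprD scaleNr opprK addrCA addrC.
  apply: le_lt_trans (ler_normD _ _) _; rewrite normrZ gtr0_norm //; nra.
- by apply/andP; split=> //; nra.
- apply: le_trans ((s_max wbar Wwbar).2 _ Vy) _.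
  have -> : - t *: v + s w' + wbar + t *: (v + w) = s w' + w'.
    by rewrite /w' scalerDr scaleNr -addrA [wbar + _]addrC !addrA [- _ + _]addrC subrK.
  exact: wbar_min.
Qed.

End ClarkeCriticalPoint.

Theorem corollary9 (R : realType) (E : completeNormedModType R)
  (V W : set E) (Phi : E -> R) (wbar : E)
  (hVW : direct_sum V W)
  (hPhi : locally_lipschitz Phi)
  (ha : forall w, W w -> Vmax Phi V w !=set0)
  (hb_fin : forall w, W w -> phi_sup Phi V w \is a fin_num)
  (hb_bdd : exists m : R, forall w, W w -> (m%:E <= phi_sup Phi V w)%E)
  (hb_min : W wbar /\ forall w, W w -> (phi_sup Phi V wbar <= phi_sup Phi V w)%E)
  (hlsc : lsc_multi W V (Vmax Phi V))
  (hconv : forall w, W w -> convex_subset (Vmax Phi V w)) :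
  exists s : E -> E,
    {within W, continuous s} /\
    (forall w, W w -> Vmax Phi V w (s w)) /\
    critical_point Phi (s wbar + wbar) /\
    ((forall w, W w -> ((Phi (s wbar + wbar))%:E <= phi_sup Phi V w)%E) /\
     exists w, W w /\ (Phi (s wbar + wbar))%:E = phi_sup Phi V w).
Proof.
(* [hb_fin] and [hb_bdd] follow from [ha] and [hb_min]. *)
have [V_sub [W_sub [V_closed [_ [VW_span _]]]]] := hVW.
have [Wwbar wbar_min] := hb_min.
have T_lsc : lsc_on W (Vmax Phi V).
  by apply: (lsc_multi_lsc_on hlsc) => w _ v [].
have T_closed w : W w -> closed (Vmax Phi V w).
  by move=> _; apply: closed_Vmax V_closed; exact: locally_lipschitz_continuous.
have [s s_cont s_max] := michael_selection (And3 ha hconv T_lsc) T_closed.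
have phi_s w : W w -> phi_sup Phi V w = (Phi (s w + w))%:E.
  by move=> Ww; exact: phi_sup_Vmax (s_max w Ww).
exists s; split; first exact: cont_on_within.
split=> //; split.
  apply: (saddle_critical_point V_sub W_sub _ s_cont s_max Wwbar).
    by move=> u; have [v [w [Vv [Ww ->]]]] := VW_span u; exists v, w.
  by move=> w Ww; have := wbar_min w Ww; rewrite !phi_s // lee_fin.
split=> [w Ww|]; first by rewrite -phi_s //; exact: wbar_min.
by exists wbar; rewrite phi_s.
Qed.
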